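(* The myopic sensing policy is not optimal in general. More precisely, both of the following hold for $N=6$, $k=3$, $T=2$: (a) there exist transition probabilities with $p_{11}>p_{01}$ and an initial belief vector $\omega(1)\in[0,1]^6$ for which some sensing policy achieves strictly larger expected total reward than the myopic sensing policy; (b) there exist transition probabilities with $p_{11}<p_{01}$ and an initial belief vector $\omega(1)\in[0,1]^6$ for which the same holds.
   Context: Opportunistic spectrum access model. There are $N$ channels. The state $S_i(t)\in\{0,1\}$ of channel $i$ in slot $t$ (0 = busy, 1 = idle) evolves as a two-state discrete-time Markov chain with transition probabilities $p_{ij}=\Pr(S_i(t+1)=j\mid S_i(t)=i)$. The chains are independent across channels and all have the same transition probabilities $p_{01},p_{11}\in[0,1]$. The initial states are independent with $\Pr(S_i(1)=1)=\omega_i(1)$. In each slot $t=1,\dots,T$, a user senses a set of exactly $k$ channels, chosen based on past actions and observations. It observes their states and obtains reward $1$ if at least one sensed channel is idle, and reward $0$ otherwise. The objective is the expected total reward over $T$ slots. Beliefs $\omega_i(t)$ (conditional probability that channel $i$ is idle in slot $t$) update as follows: $\omega_i(t+1)=p_{11}$ if $i$ was sensed and found idle; $\omega_i(t+1)=p_{01}$ if $i$ was sensed and found busy; and $\omega_i(t+1)=\omega_i(t)p_{11}+(1-\omega_i(t))p_{01}$ if $i$ was not sensed. The myopic sensing policy senses, in each slot, $k$ channels with the largest current beliefs. *)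

From Stdlib Require Import Reals List Bool.
Import ListNotations.
Open Scope R_scope.

(* Channels are indexed 0 .. N-1.
   A joint channel state is a list of N booleans (true = idle = 1, false = busy = 0).
   A sensing action is a list of N booleans: the mask of sensed channels.
   An observation is the list [sensed_i && state_i]; together with the action
   it encodes exactly the observed states of the sensed channels. *)
Definition state := list bool.
Definition action := list bool.
Definition history := list (action * list bool).  (* chronological order *)
Definition policy := history -> action.

Definition sumR (l : list R) : R := fold_right Rplus 0 l.
Definition prodR (l : list R) : R := fold_right Rmult 1 l.

Definition ntrue (l : list bool) : nat := length (filter (fun b => b) l).

Fixpoint all_states (n : nat) : list state :=
  match n with
  | O => [[]]
  | S m => flat_map (fun s => [false :: s; true :: s]) (all_states m)
  end.

Definition observe (a : action) (s : state) : list bool :=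
  map (fun p => andb (fst p) (snd p)) (combine a s).

Definition reward (a : action) (s : state) : R :=
  if existsb (fun b => b) (observe a s) then 1 else 0.

Definition trans1 (p01 p11 : R) (b b' : bool) : R :=
  if b then (if b' then p11 else 1 - p11)
  else (if b' then p01 else 1 - p01).

Definition trans_prob (p01 p11 : R) (s s' : state) : R :=
  prodR (map (fun p => trans1 p01 p11 (fst p) (snd p)) (combine s s')).

Definition init_prob (N : nat) (w : nat -> R) (s : state) : R :=
  prodR (map (fun i => if nth i s false then w i else 1 - w i) (seq 0 N)).

Fixpoint value_from (N : nat) (p01 p11 : R) (pol : policy) (t : nat)
    (h : history) (s : state) : R :=
  match t with
  | O => 0
  | S t' =>
      let a := pol h in
      reward a s +
      sumR (map (fun s' => trans_prob p01 p11 s s' *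
                   value_from N p01 p11 pol t' (h ++ [(a, observe a s)]) s')
                (all_states N))
  end.

Definition total_reward (N : nat) (p01 p11 : R) (w : nat -> R) (pol : policy)
    (T : nat) : R :=
  sumR (map (fun s => init_prob N w s * value_from N p01 p11 pol T [] s)
            (all_states N)).

Definition valid_policy (N k : nat) (pol : policy) : Prop :=
  forall h, length (pol h) = N /\ ntrue (pol h) = k.

Definition belief_update (p01 p11 : R) (w : nat -> R) (ao : action * list bool)
    : nat -> R :=
  fun i =>
    if nth i (fst ao) false then
      (if nth i (snd ao) false then p11 else p01)
    else w i * p11 + (1 - w i) * p01.

Definition belief (p01 p11 : R) (w1 : nat -> R) (h : history) : nat -> R :=
  fold_left (belief_update p01 p11) h w1.

(* myopic policy (any tie-breaking): in every slot it senses k channels with the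
   largest current beliefs *)
Definition is_myopic (N k : nat) (p01 p11 : R) (w1 : nat -> R) (pol : policy)
    : Prop :=
  forall h,
    let a := pol h in
    let b := belief p01 p11 w1 h in
    length a = N /\ ntrue a = k /\
    (forall i j, (i < N)%nat -> (j < N)%nat ->
       nth i a false = true -> nth j a false = false -> b j <= b i).

Definition myopic_suboptimal (N k T : nat) (p01 p11 : R) (w1 : nat -> R) : Prop :=
  exists pol, valid_policy N k pol /\
    forall mp, is_myopic N k p01 p11 w1 mp ->
      total_reward N p01 p11 w1 mp T < total_reward N p01 p11 w1 pol T.

(* For two slots the expected reward of a policy depends only on its first
   action and on how its second action reacts to the first observation.  For
   the parameters below the beliefs in both slots have no ties at the top-3
   boundary, so every myopic policy coincides with one explicit two-step table;
   exact rational evaluation of the model then shows that another explicit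
   table earns strictly more. *)

From Stdlib Require Import Reals List.
From Stdlib Require Import QArith Qreals Lia Bool.
Import ListNotations.
Open Scope R_scope.

(* The reduced operations [Qplus'] etc. keep the numbers small during
   evaluation by [vm_compute]. *)
Lemma Q2R_plus' x y : Q2R (Qplus' x y) = Q2R x + Q2R y.
Proof. rewrite (Qeq_eqR _ _ (Qplus'_correct x y)); apply Q2R_plus. Qed.

Lemma Q2R_mult' x y : Q2R (Qmult' x y) = Q2R x * Q2R y.
Proof. rewrite (Qeq_eqR _ _ (Qmult'_correct x y)); apply Q2R_mult. Qed.

Lemma Q2R_minus' x y : Q2R (Qminus' x y) = Q2R x - Q2R y.
Proof. rewrite (Qeq_eqR _ _ (Qminus'_correct x y)); apply Q2R_minus. Qed.

Definition sumQ (l : list Q) : Q := fold_right Qplus' 0%Q l.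
Definition prodQ (l : list Q) : Q := fold_right Qmult' 1%Q l.

Lemma Q2R_sumQ l : Q2R (sumQ l) = sumR (map Q2R l).
Proof.
  induction l as [|x l IH]; simpl; [apply RMicromega.Q2R_0|].
  now rewrite Q2R_plus', IH.
Qed.

Lemma Q2R_prodQ l : Q2R (prodQ l) = prodR (map Q2R l).
Proof.
  induction l as [|x l IH]; simpl; [apply RMicromega.Q2R_1|].
  now rewrite Q2R_mult', IH.
Qed.

Section RationalModel.

Variables (N : nat) (q01 q11 : Q).

Definition trans1Q (b b' : bool) : Q :=
  if b then (if b' then q11 else Qminus' 1 q11)
  else (if b' then q01 else Qminus' 1 q01).

Definition trans_probQ (s s' : state) : Q :=
  prodQ (map (fun p => trans1Q (fst p) (snd p)) (combine s s')).

Definition init_probQ (w : nat -> Q) (s : state) : Q :=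
  prodQ (map (fun i => if nth i s false then w i else Qminus' 1 (w i)) (seq 0 N)).

Definition rewardQ (a : action) (s : state) : Q :=
  if existsb (fun b => b) (observe a s) then 1%Q else 0%Q.

Fixpoint value_fromQ (pol : policy) (t : nat) (h : history) (s : state) : Q :=
  match t with
  | O => 0%Q
  | S t' =>
      let a := pol h in
      Qplus' (rewardQ a s)
        (sumQ (map (fun s' => Qmult' (trans_probQ s s')
                     (value_fromQ pol t' (h ++ [(a, observe a s)]) s'))
                   (all_states N)))
  end.

Definition total_rewardQ (w : nat -> Q) (pol : policy) (T : nat) : Q :=
  sumQ (map (fun s => Qmult' (init_probQ w s) (value_fromQ pol T [] s))
            (all_states N)).

Lemma Q2R_trans_probQ s s' :
  Q2R (trans_probQ s s') = trans_prob (Q2R q01) (Q2R q11) s s'.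
Proof.
  unfold trans_probQ, trans_prob; rewrite Q2R_prodQ, map_map; f_equal.
  apply map_ext; intros [[|] [|]]; simpl;
    rewrite ?Q2R_minus', ?RMicromega.Q2R_1; reflexivity.
Qed.

Lemma Q2R_rewardQ a s : Q2R (rewardQ a s) = reward a s.
Proof.
  unfold rewardQ, reward; destruct existsb;
    [apply RMicromega.Q2R_1 | apply RMicromega.Q2R_0].
Qed.

Lemma Q2R_value_fromQ pol t h s :
  Q2R (value_fromQ pol t h s) = value_from N (Q2R q01) (Q2R q11) pol t h s.
Proof.
  revert h s; induction t as [|t IH]; intros h s; simpl; [apply RMicromega.Q2R_0|].
  rewrite Q2R_plus', Q2R_rewardQ, Q2R_sumQ, map_map; do 2 f_equal.
  apply map_ext; intro s'; now rewrite Q2R_mult', Q2R_trans_probQ, IH.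
Qed.

Lemma Q2R_total_rewardQ w pol T :
  Q2R (total_rewardQ w pol T) =
  total_reward N (Q2R q01) (Q2R q11) (fun i => Q2R (w i)) pol T.
Proof.
  unfold total_rewardQ, total_reward; rewrite Q2R_sumQ, map_map; f_equal.
  apply map_ext; intro s; rewrite Q2R_mult', Q2R_value_fromQ; f_equal.
  unfold init_probQ, init_prob; rewrite Q2R_prodQ, map_map; f_equal.
  apply map_ext; intro i; destruct nth;
    rewrite ?Q2R_minus', ?RMicromega.Q2R_1; reflexivity.
Qed.

End RationalModel.

Lemma in_all_states_length (s : state) : In s (all_states (length s)).
Proof.
  induction s as [|b s IH]; simpl; [now left|].
  apply in_flat_map; exists s; split; [exact IH|].
  destruct b; simpl; auto.
Qed.

Lemma total_reward_2_ext N p01 p11 w pol pol' :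
  pol [] = pol' [] ->
  (forall s, In s (all_states N) ->
     pol [(pol [], observe (pol []) s)] = pol' [(pol' [], observe (pol' []) s)]) ->
  total_reward N p01 p11 w pol 2 = total_reward N p01 p11 w pol' 2.
Proof.
  intros Hfirst Hsecond; unfold total_reward; f_equal.
  apply map_ext_in; intros s Hs; simpl value_from; simpl app.
  now rewrite (Hsecond s Hs), Hfirst.
Qed.

Definition eqb_bools (a b : list bool) : bool :=
  if list_eq_dec bool_dec a b then true else false.

Lemma eqb_bools_eq a b : eqb_bools a b = true -> a = b.
Proof. unfold eqb_bools; now destruct list_eq_dec. Qed.

Definition myopicb (N k : nat) (b : nat -> Q) (a : action) : bool :=
  Nat.eqb (ntrue a) k &&
  forallb (fun i => forallb (fun j =>
     implb (nth i a false && negb (nth j a false)) (Qle_bool (b j) (b i)))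
     (seq 0 N)) (seq 0 N).

Lemma is_myopic_myopicb N k p01 p11 w1 mp h (b : nat -> Q) :
  is_myopic N k p01 p11 w1 mp ->
  (forall i, (i < N)%nat -> belief p01 p11 w1 h i = Q2R (b i)) ->
  In (mp h) (all_states N) /\ myopicb N k b (mp h) = true.
Proof.
  intros Hmyopic Hb; destruct (Hmyopic h) as [Hlen [Hk Horder]].
  split; [rewrite <- Hlen; apply in_all_states_length|].
  unfold myopicb; rewrite Hk, Nat.eqb_refl; simpl.
  apply forallb_forall; intros i Hi; apply forallb_forall; intros j Hj.
  apply in_seq in Hi, Hj.
  destruct (nth i (mp h) false) eqn:Ei; simpl; [|reflexivity].
  destruct (nth j (mp h) false) eqn:Ej; simpl; [reflexivity|].
  apply Qle_bool_iff, Rle_Qle; rewrite <- !Hb by lia.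
  apply Horder; auto; lia.
Qed.

Definition table_lookup (A : action) (tab : list (list bool * action))
    (o : list bool) : action :=
  match find (fun p => eqb_bools (fst p) o) tab with
  | Some p => snd p
  | None => A
  end.

Definition table_policy (A : action) (tab : list (list bool * action)) : policy :=
  fun h => match h with
           | [(_, o)] => table_lookup A tab o
           | _ => A
           end.

Lemma table_policy_in A tab h : In (table_policy A tab h) (A :: map snd tab).
Proof.
  destruct h as [|[a o] [|x y]]; simpl; auto.
  unfold table_lookup; destruct find as [p|] eqn:E; [|now left].
  right; apply find_some in E; apply in_map; tauto.
Qed.

Definition valid_actionb (N k : nat) (a : action) : bool :=
  Nat.eqb (length a) N && Nat.eqb (ntrue a) k.

Lemma valid_table_policy N k A tab :
  forallb (valid_actionb N k) (A :: map snd tab) = true ->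
  valid_policy N k (table_policy A tab).
Proof.
  intros Hvalid h; rewrite forallb_forall in Hvalid.
  pose proof (Hvalid _ (table_policy_in A tab h)) as Hh.
  apply andb_prop in Hh as [Hlen Hk].
  now apply Nat.eqb_eq in Hlen, Hk.
Qed.

Definition belief1Q (q01 q11 : Q) (w : nat -> Q) (a o : list bool) : nat -> Q :=
  fun i => if nth i a false then (if nth i o false then q11 else q01)
           else Qplus' (Qmult' (w i) q11) (Qmult' (Qminus' 1 (w i)) q01).

Lemma belief_belief1Q q01 q11 w a o i :
  belief (Q2R q01) (Q2R q11) (fun i => Q2R (w i)) [(a, o)] i =
  Q2R (belief1Q q01 q11 w a o i).
Proof.
  unfold belief, belief1Q, belief_update; simpl.
  destruct (nth i a false); [now destruct (nth i o false)|].
  now rewrite Q2R_plus', !Q2R_mult', Q2R_minus', RMicromega.Q2R_1.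
Qed.

Definition myopic_is_tableb (N k : nat) (q01 q11 : Q) (w : nat -> Q)
    (A : action) (tab : list (list bool * action)) : bool :=
  forallb (fun a => implb (myopicb N k w a) (eqb_bools a A)) (all_states N) &&
  forallb (fun s => let o := observe A s in
     forallb (fun a => implb (myopicb N k (belief1Q q01 q11 w A o) a)
                             (eqb_bools a (table_lookup A tab o)))
       (all_states N)) (all_states N).

Lemma myopic_total_reward_2 N k q01 q11 w A tab mp :
  myopic_is_tableb N k q01 q11 w A tab = true ->
  is_myopic N k (Q2R q01) (Q2R q11) (fun i => Q2R (w i)) mp ->
  total_reward N (Q2R q01) (Q2R q11) (fun i => Q2R (w i)) mp 2 =
  total_reward N (Q2R q01) (Q2R q11) (fun i => Q2R (w i)) (table_policy A tab) 2.
Proof.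
  intros Htab Hmyopic; apply andb_prop in Htab as [Hfirst Hsecond].
  rewrite forallb_forall in Hfirst, Hsecond.
  assert (Hmp_first : mp [] = A).
  { destruct (is_myopic_myopicb _ _ _ _ _ mp [] w Hmyopic) as [Hin Hm];
      [intros; reflexivity|].
    apply eqb_bools_eq; specialize (Hfirst _ Hin); now rewrite Hm in Hfirst. }
  apply total_reward_2_ext; [exact Hmp_first|].
  intros s Hs; rewrite Hmp_first; cbn [table_policy].
  specialize (Hsecond s Hs); rewrite forallb_forall in Hsecond.
  destruct (is_myopic_myopicb _ _ _ _ _ mp [(A, observe A s)]
              (belief1Q q01 q11 w A (observe A s)) Hmyopic) as [Hin Hm];
    [intros i _; apply belief_belief1Q|].
  apply eqb_bools_eq; specialize (Hsecond _ Hin); now rewrite Hm in Hsecond.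
Qed.

Lemma myopic_suboptimal_of_tables N k q01 q11 w A tab B tabB :
  myopic_is_tableb N k q01 q11 w A tab = true ->
  forallb (valid_actionb N k) (B :: map snd tabB) = true ->
  (total_rewardQ N q01 q11 w (table_policy A tab) 2 <
   total_rewardQ N q01 q11 w (table_policy B tabB) 2)%Q ->
  myopic_suboptimal N k 2 (Q2R q01) (Q2R q11) (fun i => Q2R (w i)).
Proof.
  intros Hmyopic Hvalid Hlt; exists (table_policy B tabB).
  split; [now apply valid_table_policy|].
  intros mp Hmp; rewrite (myopic_total_reward_2 _ _ _ _ _ _ _ _ Hmyopic Hmp).
  rewrite <- !Q2R_total_rewardQ; now apply Qlt_Rlt.
Qed.

Lemma Q2R_prob x : Qle_bool 0 x && Qle_bool x 1 = true -> 0 <= Q2R x <= 1.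
Proof.
  intro H; apply andb_prop in H as [H0 H1].
  rewrite <- RMicromega.Q2R_0, <- RMicromega.Q2R_1.
  split; now apply RMicromega.Qle_true.
Qed.

Lemma Q2R_prob_vector N (w : nat -> Q) :
  forallb (fun i => Qle_bool 0 (w i) && Qle_bool (w i) 1) (seq 0 N) = true ->
  forall i, (i < N)%nat -> 0 <= Q2R (w i) <= 1.
Proof.
  intros H i Hi; rewrite forallb_forall in H.
  apply Q2R_prob, H, in_seq; lia.
Qed.

Definition omega_a (i : nat) : Q := nth i [1#2; 5#8; 1#4; 7#8; 1; 3#8]%Q 0%Q.
Definition myopic_first_a := [false; true; false; true; true; false].
Definition myopic_second_a :=
[([false; false; false; false; false; false], [true; false; true; false; false; true]);
 ([false; false; false; false; true; false], [true; false; false; false; true; true]);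
 ([false; false; false; true; false; false], [true; false; false; true; false; true]);
 ([false; false; false; true; true; false], [true; false; false; true; true; false]);
 ([false; true; false; false; false; false], [true; true; false; false; false; true]);
 ([false; true; false; false; true; false], [true; true; false; false; true; false]);
 ([false; true; false; true; false; false], [true; true; false; true; false; false]);
 ([false; true; false; true; true; false], [false; true; false; true; true; false])].
Definition better_first_a := [true; true; false; false; true; false].
Definition better_second_a :=
[([false; false; false; false; false; false], [false; false; true; true; false; true]);
 ([false; false; false; false; true; false], [false; false; false; true; true; true]);
 ([false; true; false; false; false; false], [false; true; false; true; false; true]);
 ([false; true; false; false; true; false], [false; true; false; true; true; false]);
 ([true; false; false; false; false; false], [true; false; false; true; false; true]);
 ([true; false; false; false; true; false], [true; false; false; true; true; false]);
 ([true; true; false; false; false; false], [true; true; false; true; false; false]);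
 ([true; true; false; false; true; false], [true; true; false; false; true; false])].

Definition omega_b (i : nat) : Q := nth i [1#4; 1; 5#8; 3#8; 1; 1#2]%Q 0%Q.
Definition myopic_first_b := [false; true; true; false; true; false].
Definition myopic_second_b :=
[([false; false; false; false; false; false], [false; true; true; false; true; false]);
 ([false; false; false; false; true; false], [true; true; true; false; false; false]);
 ([false; false; true; false; false; false], [true; true; false; false; true; false]);
 ([false; false; true; false; true; false], [true; true; false; true; false; false]);
 ([false; true; false; false; false; false], [true; false; true; false; true; false]);
 ([false; true; false; false; true; false], [true; false; true; true; false; false]);
 ([false; true; true; false; false; false], [true; false; false; true; true; false]);
 ([false; true; true; false; true; false], [true; false; false; true; false; true])].
Definition better_first_b := [false; false; false; true; true; true].
Definition better_second_b :=
[([false; false; false; false; false; false], [false; false; false; true; true; true]);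
 ([false; false; false; false; false; true], [true; false; false; true; true; false]);
 ([false; false; false; false; true; false], [true; false; false; true; false; true]);
 ([false; false; false; false; true; true], [true; false; true; true; false; false]);
 ([false; false; false; true; false; false], [true; false; false; false; true; true]);
 ([false; false; false; true; false; true], [true; false; true; false; true; false]);
 ([false; false; false; true; true; false], [true; false; true; false; false; true]);
 ([false; false; false; true; true; true], [true; true; true; false; false; false])].

Theorem theorem3 :
  (exists (p01 p11 : R) (w1 : nat -> R),
     0 <= p01 <= 1 /\ 0 <= p11 <= 1 /\ p11 > p01 /\
     (forall i, (i < 6)%nat -> 0 <= w1 i <= 1) /\
     myopic_suboptimal 6 3 2 p01 p11 w1) /\
  (exists (p01 p11 : R) (w1 : nat -> R),
     0 <= p01 <= 1 /\ 0 <= p11 <= 1 /\ p11 < p01 /\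
     (forall i, (i < 6)%nat -> 0 <= w1 i <= 1) /\
     myopic_suboptimal 6 3 2 p01 p11 w1).
Proof.
  split.
  - exists (Q2R 0), (Q2R (3#8)), (fun i => Q2R (omega_a i)).
    split; [now apply Q2R_prob|].
    split; [now apply Q2R_prob|].
    split; [now apply Qlt_Rlt|].
    split; [now apply Q2R_prob_vector|].
    apply myopic_suboptimal_of_tables
      with myopic_first_a myopic_second_a better_first_a better_second_a;
      vm_compute; reflexivity.
  - exists (Q2R (1#2)), (Q2R (3#8)), (fun i => Q2R (omega_b i)).
    split; [now apply Q2R_prob|].
    split; [now apply Q2R_prob|].
    split; [now apply Qlt_Rlt|].
    split; [now apply Q2R_prob_vector|].
    apply myopic_suboptimal_of_tables
      with myopic_first_b myopic_second_b better_first_b better_second_b;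
      vm_compute; reflexivity.
Qed.
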